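(* Let $\nu<0$. As a function of $\lambda\in(\nu^2,+\infty)$, $\theta_{\lambda,\nu}$ is strictly increasing, with $\lim_{\lambda\to(\nu^2)^+}\theta_{\lambda,\nu}=-\infty$ and $\lim_{\lambda\to+\infty}\theta_{\lambda,\nu}=+\infty$. Moreover, for every $\lambda>\nu^2$, $\frac{1}{2\pi}\Big(\ln(\sqrt\lambda+\nu)-\frac{2\sqrt\lambda}{\sqrt\lambda+\nu}+2\gamma\Big)\le\theta_{\lambda,\nu}\le\frac{1}{2\pi}\Big(\ln(\sqrt\lambda+\nu)-\frac{\sqrt\lambda}{\sqrt\lambda+\nu}+2\gamma\Big)$.
   Context: $\theta_{\lambda,\nu}=\frac{1}{2\pi}\big(\psi(\frac12+\frac{\nu}{2\sqrt\lambda})+2\gamma+\ln(2\sqrt\lambda)\big)$, where $\psi=\Gamma'/\Gamma$ is the digamma function and $\gamma$ the Euler–Mascheroni constant. *)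

From Stdlib Require Import Reals.
From Coquelicot Require Import Coquelicot.
Open Scope R_scope.

Definition Gamma (x : R) : R :=
  RInt_gen (fun t => Rpower t (x - 1) * exp (- t)) (at_right 0) (Rbar_locally p_infty).

Definition digamma (x : R) : R := Derive Gamma x / Gamma x.

(* Euler–Mascheroni constant: lim_n (H_n - ln n), here indexed as
   H_{n+1} - ln (n+1) = sum_{k=0}^{n} 1/(k+1) - ln (n+1). *)
Definition euler_gamma : R :=
  real (Lim_seq (fun n => sum_f_R0 (fun k => / INR (k + 1)) n - ln (INR (n + 1)))).

Definition theta (lam nu : R) : R :=
  / (2 * PI) * (digamma (/ 2 + nu / (2 * sqrt lam)) + 2 * euler_gamma
                + ln (2 * sqrt lam)).

(* Everything rests on three properties of the digamma function on (0, +oo):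
     (a) ln x - 1/x <= psi(x) <= ln x,
     (b) psi(x + 1) = psi(x) + 1/x,
     (c) psi is nondecreasing,
   obtained from the integral representation psi = Gamma_ln / Gamma, where
   Gamma_ln(s) = int_0^oo t^{s-1} e^{-t} ln t dt. *)

From Stdlib Require Import Reals Lra FunctionalExtensionality Classical_Prop.
From Coquelicot Require Import Coquelicot.
Open Scope R_scope.

Lemma ln_le_sub1 u : 0 < u -> ln u <= u - 1.
Proof. intros Hu. pose proof (exp_ineq1_le (ln u)) as H. rewrite exp_ln in H; lra. Qed.

Lemma exp_monotone x y : x <= y -> exp x <= exp y.
Proof. intros [H|H]; [left; apply exp_increasing; auto | subst; lra]. Qed.

Lemma exp_gt_self v : v < exp v.
Proof. pose proof (exp_ineq1_le v). lra. Qed.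

(* A numerical upper bound on ln 2 = 0.693..., obtained from (1 + 37/400)^8 > 2. *)
Lemma ln2_lt : ln 2 < 37/50.
Proof.
  assert (Hpow : forall n a, exp (INR n * a) = exp a ^ n).
  { induction n as [|n IH]; intros a; simpl.
    - rewrite Rmult_0_l, exp_0. reflexivity.
    - rewrite <- IH, <- exp_plus. f_equal. destruct n; simpl; ring. }
  assert (H : 2 < exp (37/50)).
  { replace (37/50) with (INR 8 * (37/400)) by (simpl; field).
    rewrite Hpow. apply Rlt_le_trans with ((1 + 37/400)^8).
    - simpl. lra.
    - apply pow_incr. pose proof (exp_ineq1_le (37/400)). lra. }
  rewrite <- (ln_exp (37/50)). apply ln_increasing; lra.
Qed.

Lemma exp_taylor2_bound u : Rabs (exp u - 1 - u) <= u^2 * exp (Rabs u).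
Proof.
  pose proof (exp_ineq1_le u). pose proof (exp_ineq1_le (-u)).
  assert (Hinv : exp u * exp (-u) = 1)
    by (rewrite <- exp_plus, Rplus_opp_r; apply exp_0).
  pose proof (exp_pos u). pose proof (exp_pos (-u)).
  assert (exp u - 1 - u <= u * (exp u - 1)) by nra.
  rewrite Rabs_pos_eq by lra.
  destruct (Rle_dec 0 u).
  - rewrite Rabs_pos_eq by lra. assert (exp u - 1 <= u * exp u) by nra. nra.
  - rewrite Rabs_left by lra. nra.
Qed.

Lemma exp_abs_le_cosh d L : 0 <= d -> exp (d * Rabs L) <= exp (d * L) + exp (- d * L).
Proof.
  intros Hd. pose proof (exp_pos (d * L)). pose proof (exp_pos (- d * L)).
  destruct (Rle_dec 0 L).
  - rewrite Rabs_pos_eq by lra. lra.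
  - rewrite Rabs_left by lra. replace (d * - L) with (- d * L) by ring. lra.
Qed.

(* |L| and L^2 are dominated by e^{eps L} + e^{-eps L}; with L = ln t this lets
   t^{+-eps} absorb the logarithmic factors in Euler's integrals. *)
Lemma abs_le_cosh eps L : 0 < eps -> Rabs L <= / eps * (exp (eps * L) + exp (- eps * L)).
Proof.
  intros He. pose proof (exp_gt_self (eps * Rabs L)).
  pose proof (exp_abs_le_cosh eps L ltac:(lra)).
  apply Rmult_le_reg_l with eps; [lra|].
  rewrite <- Rmult_assoc, Rinv_r, Rmult_1_l by lra. lra.
Qed.

Lemma sq_le_cosh eps L : 0 < eps -> L ^ 2 <= 4 / eps ^ 2 * (exp (eps * L) + exp (- eps * L)).
Proof.
  intros He. set (v := eps * Rabs L / 2).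
  assert (Hv : 0 <= v) by (unfold v; pose proof (Rabs_pos L); nra).
  assert (Hsq : v ^ 2 <= exp (eps * Rabs L)).
  { replace (eps * Rabs L) with (v + v) by (unfold v; field).
    rewrite exp_plus. pose proof (exp_gt_self v). nra. }
  pose proof (exp_abs_le_cosh eps L ltac:(lra)).
  assert (Ev : v ^ 2 = eps ^ 2 / 4 * L ^ 2) by (unfold v; rewrite <- (pow2_abs L); field).
  apply Rmult_le_reg_l with (eps ^ 2 / 4); [nra|].
  replace (eps ^ 2 / 4 * (4 / eps ^ 2 * (exp (eps * L) + exp (- eps * L))))
    with (exp (eps * L) + exp (- eps * L)) by (field; lra).
  lra.
Qed.

Definition is_RInt_0oo (f : R -> R) (l : R) :=
  is_RInt_gen f (at_right 0) (Rbar_locally p_infty) l.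

Definition RInt_0oo (f : R -> R) : R := RInt_gen f (at_right 0) (Rbar_locally p_infty).

Definition cont_pos (f : R -> R) := forall t, 0 < t -> continuous f t.

Definition bounded_partials (f : R -> R) :=
  exists M, forall a b, 0 < a -> a <= b -> RInt f a b <= M.

Lemma at_right_0_below a0 : 0 < a0 -> at_right 0 (fun t => 0 < t < a0).
Proof.
  intros Ha0. exists (mkposreal a0 Ha0). intros y Hy Hy0. simpl in Hy. split; auto.
  assert (Hy1 : Rabs (y - 0) < a0) by exact Hy.
  rewrite Rminus_0_r, Rabs_pos_eq in Hy1; lra.
Qed.

Lemma eventually_pos_interval : filter_prod (at_right 0) (Rbar_locally p_infty)
  (fun ab => 0 < fst ab /\ fst ab <= snd ab).
Proof.
  exists (fun a => 0 < a < 1) (fun b => 1 < b).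
  - apply at_right_0_below; lra.
  - exists 1. auto.
  - intros a b Ha Hb. simpl. lra.
Qed.

Lemma cont_pos_ex_RInt f a b : cont_pos f -> 0 < a -> a <= b -> ex_RInt f a b.
Proof.
  intros Hf Ha Hab. apply (@ex_RInt_continuous R_CompleteNormedModule). intros z Hz.
  apply Hf. rewrite Rmin_left in Hz by lra. lra.
Qed.

Lemma cont_pos_plus f g : cont_pos f -> cont_pos g -> cont_pos (fun t => f t + g t).
Proof. intros Hf Hg t Ht. apply (@continuous_plus R_UniformSpace R_AbsRing R_NormedModule f g t); auto. Qed.

Lemma cont_pos_minus f g : cont_pos f -> cont_pos g -> cont_pos (fun t => f t - g t).
Proof. intros Hf Hg t Ht. apply (@continuous_minus R_UniformSpace R_AbsRing R_NormedModule f g t); auto. Qed.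

Lemma cont_pos_scal c f : cont_pos f -> cont_pos (fun t => c * f t).
Proof. intros Hf t Ht. apply (@continuous_scal_r R_UniformSpace R_AbsRing R_NormedModule c f t); auto. Qed.

Lemma RInt_nonneg_mono f a a' b' b : cont_pos f -> (forall t, 0 < t -> 0 <= f t) ->
  0 < a -> a <= a' -> a' <= b' -> b' <= b -> RInt f a' b' <= RInt f a b.
Proof.
  intros Hc Hp Ha H1 H2 H3.
  assert (Hex : forall u v, a <= u -> u <= v -> ex_RInt f u v)
    by (intros; apply cont_pos_ex_RInt; auto; lra).
  assert (Hnn : forall u v, a <= u -> u <= v -> 0 <= RInt f u v)
    by (intros; apply RInt_ge_0; auto; intros; apply Hp; lra).
  rewrite <- (RInt_Chasles f a a' b), <- (RInt_Chasles f a' b' b) by (apply Hex; lra).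
  pose proof (Hnn a a'). pose proof (Hnn b' b). unfold plus; simpl. lra.
Qed.

Lemma is_RInt_0oo_nonneg f : cont_pos f -> (forall t, 0 < t -> 0 <= f t) ->
  bounded_partials f ->
  exists S, is_RInt_0oo f S /\ (forall a b, 0 < a -> a <= b -> RInt f a b <= S).
Proof.
  intros Hc Hp [M HM].
  set (E := fun y => exists a b, 0 < a /\ a <= b /\ y = RInt f a b).
  destruct (completeness E) as [S [HS1 HS2]].
  { exists M. intros y [a [b [Ha [Hab ->]]]]. auto. }
  { exists (RInt f 1 1), 1, 1. repeat split; lra. }
  assert (Hle : forall a b, 0 < a -> a <= b -> RInt f a b <= S)
    by (intros a b Ha Hab; apply HS1; exists a, b; auto).
  exists S. split; auto.
  intros P [eps HP].
  assert (Hclose : exists a0 b0, 0 < a0 /\ a0 <= b0 /\ S - eps < RInt f a0 b0).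
  { apply NNPP. intros Hn.
    assert (S <= S - eps).
    { apply HS2. intros y [a [b [Ha [Hab ->]]]].
      apply Rnot_lt_le. intros Hl. apply Hn. exists a, b. auto. }
    destruct eps; simpl in *; lra. }
  destruct Hclose as [a0 [b0 [Ha0 [Hab0 Hlt]]]].
  exists (fun a => 0 < a < a0) (fun b => b0 < b).
  - apply at_right_0_below; auto.
  - exists b0. auto.
  - intros a b Ha Hb. exists (RInt f a b). split.
    + apply (@RInt_correct R_CompleteNormedModule). apply cont_pos_ex_RInt; auto; lra.
    + apply HP. change (Rabs (RInt f a b - S) < eps).
      assert (RInt f a0 b0 <= RInt f a b) by (apply RInt_nonneg_mono; auto; lra).
      pose proof (Hle a b ltac:(lra) ltac:(lra)).
      rewrite Rabs_left1 by lra. lra.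
Qed.

Lemma bounded_partials_le f g : cont_pos f -> cont_pos g ->
  (forall t, 0 < t -> f t <= g t) -> bounded_partials g -> bounded_partials f.
Proof.
  intros Hf Hg Hfg [M HM]. exists M. intros a b Ha Hab.
  apply Rle_trans with (RInt g a b); auto.
  apply RInt_le; auto; try (apply cont_pos_ex_RInt; auto).
  intros; apply Hfg; lra.
Qed.

Lemma bounded_partials_plus f g : cont_pos f -> cont_pos g ->
  bounded_partials f -> bounded_partials g -> bounded_partials (fun t => f t + g t).
Proof.
  intros Hf Hg [M HM] [N HN]. exists (M + N). intros a b Ha Hab.
  assert (E : RInt (fun t => f t + g t) a b = RInt f a b + RInt g a b)
    by (apply (RInt_plus f g); apply cont_pos_ex_RInt; auto).
  rewrite E. specialize (HM a b Ha Hab). specialize (HN a b Ha Hab). lra.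
Qed.

Lemma bounded_partials_scal c f : 0 <= c -> cont_pos f ->
  bounded_partials f -> bounded_partials (fun t => c * f t).
Proof.
  intros Hc Hf [M HM]. exists (c * M). intros a b Ha Hab.
  assert (E : RInt (fun t => c * f t) a b = c * RInt f a b)
    by (apply (RInt_scal f); apply cont_pos_ex_RInt; auto).
  rewrite E. specialize (HM a b Ha Hab). apply Rmult_le_compat_l; auto.
Qed.

(* Comparison test: a function dominated in absolute value by a nonnegative function
   with bounded partial integrals is integrable (write f = (f + g) - g). *)
Lemma is_RInt_0oo_dominated f g : cont_pos f -> cont_pos g ->
  (forall t, 0 < t -> Rabs (f t) <= g t) -> bounded_partials g ->
  exists l, is_RInt_0oo f l.
Proof.
  intros Hf Hg Hfg Hb.
  assert (Hbetween : forall t, 0 < t -> - g t <= f t <= g t)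
    by (intros t Ht; apply Rabs_le_between, Hfg, Ht).
  destruct (is_RInt_0oo_nonneg (fun t => f t + g t)) as [S1 [H1 _]].
  { apply cont_pos_plus; auto. }
  { intros t Ht. specialize (Hbetween t Ht). lra. }
  { apply bounded_partials_le with (fun t => 2 * g t).
    - apply cont_pos_plus; auto.
    - apply cont_pos_scal; auto.
    - intros t Ht. specialize (Hbetween t Ht). lra.
    - apply bounded_partials_scal; auto; lra. }
  destruct (is_RInt_0oo_nonneg g) as [S2 [H2 _]]; auto.
  { intros t Ht. specialize (Hbetween t Ht). lra. }
  exists (minus S1 S2).
  replace f with (fun y => minus (f y + g y) (g y)).
  - exact (is_RInt_gen_minus _ _ _ _ H1 H2).
  - apply functional_extensionality. intros y. unfold minus, plus, opp; simpl. ring.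
Qed.

Lemma is_RInt_0oo_unique f l : is_RInt_0oo f l -> RInt_0oo f = l.
Proof. intros H. exact (is_RInt_gen_unique f l H). Qed.

Lemma is_RInt_0oo_RInt f : (exists l, is_RInt_0oo f l) -> is_RInt_0oo f (RInt_0oo f).
Proof. intros [l H]. rewrite (is_RInt_0oo_unique _ _ H). exact H. Qed.

Lemma is_RInt_0oo_eq f l1 l2 : is_RInt_0oo f l1 -> is_RInt_0oo f l2 -> l1 = l2.
Proof. intros H1 H2. rewrite <- (is_RInt_0oo_unique _ _ H1). apply is_RInt_0oo_unique, H2. Qed.

Lemma is_RInt_0oo_plus f g lf lg :
  is_RInt_0oo f lf -> is_RInt_0oo g lg -> is_RInt_0oo (fun t => f t + g t) (lf + lg).
Proof. intros Hf Hg. exact (is_RInt_gen_plus f g lf lg Hf Hg). Qed.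

Lemma is_RInt_0oo_minus f g lf lg :
  is_RInt_0oo f lf -> is_RInt_0oo g lg -> is_RInt_0oo (fun t => f t - g t) (lf - lg).
Proof. intros Hf Hg. exact (is_RInt_gen_minus f g lf lg Hf Hg). Qed.

Lemma is_RInt_0oo_scal c f lf : is_RInt_0oo f lf -> is_RInt_0oo (fun t => c * f t) (c * lf).
Proof. intros Hf. exact (is_RInt_gen_scal f c lf Hf). Qed.

Lemma is_RInt_0oo_abs_le f g lf lg : is_RInt_0oo f lf -> is_RInt_0oo g lg ->
  (forall t, 0 < t -> Rabs (f t) <= g t) -> Rabs lf <= lg.
Proof.
  intros Hf Hg Hfg.
  apply (@RInt_gen_norm R_CompleteNormedModule (at_right 0) (Rbar_locally p_infty) _ _ f g lf lg); auto.
  - eapply filter_imp; [|exact eventually_pos_interval]. intros ab [_ H]; exact H.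
  - eapply filter_imp; [|exact eventually_pos_interval].
    intros [a b] [Ha _] t Ht. simpl in *. apply Hfg. lra.
Qed.

Lemma is_RInt_0oo_zero : is_RInt_0oo (fun _ => 0) 0.
Proof.
  intros P [eps HP]. unfold filtermapi. eapply filter_imp; [|exact eventually_pos_interval].
  intros [a b] _. exists 0. split.
  - pose proof (@is_RInt_const R_NormedModule a b 0) as K.
    unfold scal in K; simpl in K; unfold mult in K; simpl in K.
    rewrite Rmult_0_r in K. exact K.
  - apply HP, ball_center.
Qed.

Lemma is_RInt_0oo_ge0 f l : is_RInt_0oo f l -> (forall t, 0 < t -> 0 <= f t) -> 0 <= l.
Proof.
  intros H Hp. pose proof (is_RInt_0oo_abs_le _ _ _ _ is_RInt_0oo_zero H) as K.
  rewrite Rabs_R0 in K. apply K. intros t Ht. rewrite Rabs_R0. auto.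
Qed.

Lemma is_RInt_0oo_derive F f L0 L1 : (forall t, 0 < t -> is_derive F t (f t)) -> cont_pos f ->
  filterlim F (at_right 0) (locally L0) -> filterlim F (Rbar_locally p_infty) (locally L1) ->
  is_RInt_0oo f (L1 - L0).
Proof.
  intros HD Hc H0 H1.
  assert (HDe : forall t, 0 < t -> Derive F t = f t) by (intros; apply is_derive_unique; auto).
  apply (is_RInt_gen_ext (Derive F) f).
  { eapply filter_imp; [|exact eventually_pos_interval].
    intros [a b] [Ha Hab] t Ht. simpl in *. rewrite Rmin_left in Ht by lra. apply HDe. lra. }
  apply is_RInt_gen_Derive; auto.
  - eapply filter_imp; [|exact eventually_pos_interval]. intros [a b] [Ha Hab] t Ht. simpl in *.
    rewrite Rmin_left in Ht by lra. exists (f t). apply HD. lra.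
  - eapply filter_imp; [|exact eventually_pos_interval]. intros [a b] [Ha Hab] t Ht. simpl in *.
    rewrite Rmin_left in Ht by lra. assert (Htp : 0 < t) by lra.
    apply continuous_ext_loc with f; [|apply Hc; auto].
    exists (mkposreal t Htp). intros y Hy.
    assert (Hy1 : Rabs (y - t) < t) by exact Hy.
    symmetry. apply HDe. apply Rabs_lt_between in Hy1. lra.
Qed.

Definition euler_kernel (s t : R) : R := Rpower t (s - 1) * exp (- t).

Lemma euler_kernel_exp s t : euler_kernel s t = exp ((s - 1) * ln t - t).
Proof. unfold euler_kernel, Rpower. rewrite <- exp_plus. reflexivity. Qed.

Lemma euler_kernel_pos s t : 0 < euler_kernel s t.
Proof. rewrite euler_kernel_exp. apply exp_pos. Qed.

Lemma euler_kernel_shift s a t : euler_kernel (s + a) t = exp (a * ln t) * euler_kernel s t.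
Proof. rewrite !euler_kernel_exp, <- exp_plus. f_equal. ring. Qed.

Lemma euler_kernel_succ s t : 0 < t -> euler_kernel (s + 1) t = t * euler_kernel s t.
Proof. intros Ht. rewrite euler_kernel_shift, Rmult_1_l, exp_ln; auto. Qed.

Lemma cont_pos_kernel_lnpow s n : cont_pos (fun t => euler_kernel s t * ln t ^ n).
Proof.
  intros t Ht. apply (@ex_derive_continuous R_AbsRing R_NormedModule).
  apply ex_derive_ext with (fun t => exp ((s - 1) * ln t - t) * ln t ^ n).
  - intros; rewrite euler_kernel_exp; auto.
  - auto_derive. auto.
Qed.

Lemma cont_pos_kernel s : cont_pos (euler_kernel s).
Proof.
  intros t Ht. apply continuous_ext with (fun t => euler_kernel s t * ln t ^ 0).
  - intros; simpl; ring.
  - apply cont_pos_kernel_lnpow; auto.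
Qed.

Lemma cont_pos_kernel_ln s : cont_pos (fun t => euler_kernel s t * ln t).
Proof.
  intros t Ht. apply continuous_ext with (fun t => euler_kernel s t * ln t ^ 1).
  - intros; simpl; ring.
  - apply cont_pos_kernel_lnpow; auto.
Qed.

(* Comparison function t^{s-1} / (1+t)^{s+1}, whose primitive (t/(1+t))^s / s is
   bounded by 1/s: it has bounded partial integrals for s > 0. *)
Definition beta_kernel (s t : R) := exp ((s - 1) * ln t - (s + 1) * ln (1 + t)).

Lemma beta_kernel_primitive s t : 0 < s -> 0 < t ->
  is_derive (fun t => exp (s * (ln t - ln (1 + t))) / s) t (beta_kernel s t).
Proof.
  intros Hs Ht. unfold beta_kernel. auto_derive.
  - repeat split; lra.
  - replace ((s - 1) * ln t - (s + 1) * ln (1 + t)) with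
      (s * (ln t + - ln (1 + t)) + (- ln t) + (- ln (1 + t))) by ring.
    rewrite !exp_plus, !exp_Ropp, !exp_ln by lra. field. lra.
Qed.

Lemma cont_pos_beta_kernel s : cont_pos (beta_kernel s).
Proof.
  intros t Ht. apply (@ex_derive_continuous R_AbsRing R_NormedModule).
  unfold beta_kernel. auto_derive. lra.
Qed.

Lemma bounded_partials_beta_kernel s : 0 < s -> bounded_partials (beta_kernel s).
Proof.
  intros Hs. exists (/ s). intros a b Ha Hab.
  set (P := fun t => exp (s * (ln t - ln (1 + t))) / s).
  assert (H : is_RInt (beta_kernel s) a b (minus (P b) (P a))).
  { apply (@is_RInt_derive R_CompleteNormedModule); intros x Hx;
      rewrite Rmin_left in Hx by lra.
    - apply beta_kernel_primitive; lra.
    - apply cont_pos_beta_kernel; lra. }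
  rewrite (is_RInt_unique _ _ _ _ H). unfold minus, plus, opp, P; simpl.
  assert (exp (s * (ln b - ln (1 + b))) <= 1).
  { apply Rle_trans with (exp 0); [apply exp_monotone | rewrite exp_0; lra].
    assert (ln b <= ln (1 + b)) by (apply ln_le; lra). nra. }
  pose proof (exp_pos (s * (ln a - ln (1 + a)))).
  assert (0 < / s) by (apply Rinv_0_lt_compat; lra).
  unfold Rdiv. nra.
Qed.

(* t^{s-1} e^{-t} <= C_s t^{s-1} / (1+t)^{s+1}, from ln y <= y - 1 at y = (1+t)/(s+1). *)
Lemma euler_kernel_le_beta s t : 0 < s -> 0 < t ->
  euler_kernel s t <= exp ((s + 1) * ln (s + 1) - s) * beta_kernel s t.
Proof.
  intros Hs Ht. rewrite euler_kernel_exp. unfold beta_kernel.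
  rewrite <- exp_plus. apply exp_monotone.
  pose proof (ln_le_sub1 ((1 + t) / (s + 1)) ltac:(apply Rdiv_lt_0_compat; lra)) as H.
  rewrite ln_div in H by lra.
  apply Rmult_le_compat_l with (r := s + 1) in H; [|lra].
  replace ((s + 1) * ((1 + t) / (s + 1) - 1)) with (t - s) in H by (field; lra).
  nra.
Qed.

Lemma bounded_partials_kernel s : 0 < s -> bounded_partials (euler_kernel s).
Proof.
  intros Hs. apply bounded_partials_le with
    (fun t => exp ((s + 1) * ln (s + 1) - s) * beta_kernel s t).
  - apply cont_pos_kernel.
  - apply cont_pos_scal, cont_pos_beta_kernel.
  - intros; apply euler_kernel_le_beta; auto.
  - apply bounded_partials_scal; [left; apply exp_pos | apply cont_pos_beta_kernel |].
    apply bounded_partials_beta_kernel; auto.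
Qed.

Lemma kernel_ln_dominated s eps t : 0 < eps ->
  Rabs (euler_kernel s t * ln t)
    <= / eps * (euler_kernel (s + eps) t + euler_kernel (s - eps) t).
Proof.
  intros He. rewrite Rabs_mult, Rabs_pos_eq by (left; apply euler_kernel_pos).
  unfold Rminus. rewrite !euler_kernel_shift.
  pose proof (abs_le_cosh eps (ln t) He). pose proof (euler_kernel_pos s t).
  replace (- eps * ln t) with (-eps * ln t) in * by ring. nra.
Qed.

Lemma kernel_ln2_dominated s eps t : 0 < eps ->
  euler_kernel s t * ln t ^ 2
    <= 4 / eps ^ 2 * (euler_kernel (s + eps) t + euler_kernel (s - eps) t).
Proof.
  intros He. unfold Rminus. rewrite !euler_kernel_shift.
  pose proof (sq_le_cosh eps (ln t) He). pose proof (euler_kernel_pos s t).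
  replace (- eps * ln t) with (-eps * ln t) in * by ring. nra.
Qed.

Lemma bounded_partials_kernel_pair s c : 0 < s -> 0 <= c ->
  bounded_partials (fun t => c * (euler_kernel (s + s / 2) t + euler_kernel (s - s / 2) t)).
Proof.
  intros Hs Hc. apply bounded_partials_scal; auto.
  - apply cont_pos_plus; apply cont_pos_kernel.
  - apply bounded_partials_plus; try apply cont_pos_kernel; apply bounded_partials_kernel; lra.
Qed.

Lemma is_RInt_0oo_Gamma s : 0 < s -> is_RInt_0oo (euler_kernel s) (Gamma s).
Proof.
  intros Hs. apply is_RInt_0oo_RInt.
  destruct (is_RInt_0oo_nonneg (euler_kernel s)) as [S [H _]].
  - apply cont_pos_kernel.
  - intros; left; apply euler_kernel_pos.
  - apply bounded_partials_kernel; auto.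
  - exists S; auto.
Qed.

(* Gamma_ln s = int t^{s-1} e^{-t} ln t dt, which will be Gamma'(s). *)
Definition Gamma_ln (s : R) : R := RInt_0oo (fun t => euler_kernel s t * ln t).

Lemma is_RInt_0oo_Gamma_ln s : 0 < s -> is_RInt_0oo (fun t => euler_kernel s t * ln t) (Gamma_ln s).
Proof.
  intros Hs. apply is_RInt_0oo_RInt. apply is_RInt_0oo_dominated with
    (fun t => / (s / 2) * (euler_kernel (s + s / 2) t + euler_kernel (s - s / 2) t)).
  - apply cont_pos_kernel_ln.
  - apply cont_pos_scal, cont_pos_plus; apply cont_pos_kernel.
  - intros t Ht. apply kernel_ln_dominated. lra.
  - apply bounded_partials_kernel_pair; auto. left; apply Rinv_0_lt_compat; lra.
Qed.

(* Gamma_ln2 s = int t^{s-1} e^{-t} (ln t)^2 dt, the constant controlling Gamma''. *)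
Definition Gamma_ln2 (s : R) : R := RInt_0oo (fun t => euler_kernel s t * ln t ^ 2).

Lemma is_RInt_0oo_Gamma_ln2 s :
  0 < s -> is_RInt_0oo (fun t => euler_kernel s t * ln t ^ 2) (Gamma_ln2 s).
Proof.
  intros Hs. apply is_RInt_0oo_RInt.
  destruct (is_RInt_0oo_nonneg (fun t => euler_kernel s t * ln t ^ 2)) as [S [H _]].
  - apply cont_pos_kernel_lnpow.
  - intros t _. pose proof (euler_kernel_pos s t). pose proof (pow2_ge_0 (ln t)). nra.
  - apply bounded_partials_le with
      (fun t => 4 / (s / 2) ^ 2 * (euler_kernel (s + s / 2) t + euler_kernel (s - s / 2) t)).
    + apply cont_pos_kernel_lnpow.
    + apply cont_pos_scal, cont_pos_plus; apply cont_pos_kernel.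
    + intros t Ht. apply kernel_ln2_dominated. lra.
    + apply bounded_partials_kernel_pair; auto. left; apply Rdiv_lt_0_compat; nra.
  - exists S; auto.
Qed.

(* Gamma_ln2 s >= 0, needed to make the error constant of Gamma' nonnegative. *)
Lemma Gamma_ln2_ge0 s : 0 < s -> 0 <= Gamma_ln2 s.
Proof.
  intros Hs. apply (is_RInt_0oo_ge0 _ _ (is_RInt_0oo_Gamma_ln2 s Hs)).
  intros t _. pose proof (euler_kernel_pos s t). pose proof (pow2_ge_0 (ln t)). nra.
Qed.

Lemma kernel_difference_quotient s h d t : 0 < t -> h <> 0 -> Rabs h <= d ->
  Rabs (/ h * (euler_kernel (s + h) t - euler_kernel s t) - euler_kernel s t * ln t)
   <= Rabs h * (euler_kernel (s + d) t * ln t ^ 2 + euler_kernel (s - d) t * ln t ^ 2).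
Proof.
  intros Ht Hh Hhd.
  assert (Hha : 0 < Rabs h) by (apply Rabs_pos_lt; auto).
  assert (Hw := euler_kernel_pos s t).
  rewrite (euler_kernel_shift s h), (euler_kernel_shift s d).
  replace (s - d) with (s + - d) by ring. rewrite (euler_kernel_shift s (- d)).
  set (L := ln t). set (w := euler_kernel s t) in *.
  replace (/ h * (exp (h * L) * w - w) - w * L)
    with (w * (/ h * (exp (h * L) - 1 - h * L))) by (field; auto).
  rewrite Rabs_mult, (Rabs_pos_eq w), Rabs_mult, Rabs_inv by lra.
  (* Taylor: |e^{hL} - 1 - hL| <= h^2 L^2 e^{|hL|} <= h^2 L^2 (e^{dL} + e^{-dL}) *)
  assert (Hcosh : exp (Rabs (h * L)) <= exp (d * L) + exp (- d * L)).
  { eapply Rle_trans; [|apply exp_abs_le_cosh; lra]. apply exp_monotone.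
    rewrite Rabs_mult. apply Rmult_le_compat_r; auto. apply Rabs_pos. }
  pose proof (exp_taylor2_bound (h * L)) as Htaylor.
  replace ((h * L) ^ 2) with (Rabs h * Rabs h * L ^ 2) in Htaylor
    by (rewrite <- Rabs_mult, Rabs_pos_eq by nra; ring).
  assert (Hquot : / Rabs h * Rabs (exp (h * L) - 1 - h * L)
            <= Rabs h * L ^ 2 * (exp (d * L) + exp (- d * L))).
  { apply Rmult_le_reg_l with (Rabs h); auto.
    rewrite <- Rmult_assoc, Rinv_r, Rmult_1_l by lra.
    eapply Rle_trans; [exact Htaylor|].
    assert (0 <= Rabs h * Rabs h * L ^ 2) by (pose proof (pow2_ge_0 L); nra).
    replace (Rabs h * (Rabs h * L ^ 2 * (exp (d * L) + exp (- d * L))))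
      with (Rabs h * Rabs h * L ^ 2 * (exp (d * L) + exp (- d * L))) by ring.
    apply Rmult_le_compat_l; auto. }
  replace (Rabs h * (exp (d * L) * w * L ^ 2 + exp (- d * L) * w * L ^ 2))
    with (w * (Rabs h * L ^ 2 * (exp (d * L) + exp (- d * L)))) by ring.
  apply Rmult_le_compat_l; lra.
Qed.

(* Differentiation under the integral sign: Gamma'(s) = int t^{s-1} e^{-t} ln t dt.
   Integrating the pointwise bound above gives
   |(Gamma(s+h) - Gamma(s))/h - Gamma_ln s| <= |h| K  for |h| <= s/2. *)
Lemma is_derive_Gamma s : 0 < s -> is_derive Gamma s (Gamma_ln s).
Proof.
  intros Hs. apply is_derive_Reals. intros eps Heps.
  set (d := s / 2). assert (Hd : 0 < d) by (unfold d; lra).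
  set (K := Gamma_ln2 (s + d) + Gamma_ln2 (s - d)).
  assert (HK : 0 <= K).
  { unfold K. pose proof (Gamma_ln2_ge0 (s + d)). pose proof (Gamma_ln2_ge0 (s - d)).
    unfold d in *. lra. }
  assert (Hdel : 0 < Rmin d (eps / (K + 1))) by (apply Rmin_pos; auto; apply Rdiv_lt_0_compat; lra).
  exists (mkposreal _ Hdel). intros h Hh0 Hh. simpl in Hh.
  assert (Hhd : Rabs h <= d) by (pose proof (Rmin_l d (eps / (K + 1))); lra).
  assert (Hhe : Rabs h * (K + 1) < eps).
  { pose proof (Rmin_r d (eps / (K + 1))).
    apply Rmult_lt_reg_r with (/ (K + 1)); [apply Rinv_0_lt_compat; lra|].
    rewrite Rmult_assoc, Rinv_r, Rmult_1_r by lra. lra. }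
  assert (Hsh : 0 < s + h) by (apply Rabs_le_between in Hhd; unfold d in *; lra).
  assert (Hquot : is_RInt_0oo
            (fun t => / h * (euler_kernel (s + h) t - euler_kernel s t) - euler_kernel s t * ln t)
            (/ h * (Gamma (s + h) - Gamma s) - Gamma_ln s)).
  { apply is_RInt_0oo_minus; [apply is_RInt_0oo_scal, is_RInt_0oo_minus|];
      [apply is_RInt_0oo_Gamma | apply is_RInt_0oo_Gamma | apply is_RInt_0oo_Gamma_ln]; auto. }
  assert (Hbound : is_RInt_0oo
            (fun t => Rabs h * (euler_kernel (s + d) t * ln t ^ 2 + euler_kernel (s - d) t * ln t ^ 2))
            (Rabs h * K)).
  { apply is_RInt_0oo_scal, is_RInt_0oo_plus; apply is_RInt_0oo_Gamma_ln2; unfold d; lra. }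
  replace ((Gamma (s + h) - Gamma s) / h - Gamma_ln s)
    with (/ h * (Gamma (s + h) - Gamma s) - Gamma_ln s) by (field; auto).
  eapply Rle_lt_trans.
  - apply (is_RInt_0oo_abs_le _ _ _ _ Hquot Hbound).
    intros t Ht. apply kernel_difference_quotient; auto.
  - pose proof (Rabs_pos h). nra.
Qed.

Lemma digamma_eq s : 0 < s -> digamma s = Gamma_ln s / Gamma s.
Proof. intros Hs. unfold digamma. rewrite (is_derive_unique _ _ _ (is_derive_Gamma s Hs)). reflexivity. Qed.

Lemma dominated_to_0 {T} {F : (T -> Prop) -> Prop} {FF : Filter F} (f g : T -> R) C :
  F (fun t => Rabs (f t) <= C * exp (g t)) -> (forall M, F (fun t => g t < M)) ->
  filterlim f F (locally 0).
Proof.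
  intros Hf Hg.
  assert (Hlim : filterlim (fun t => C * exp (g t)) F (locally 0)).
  { apply filterlim_comp with (G := Rbar_locally m_infty) (g := fun u => C * exp u).
    - intros P [M HM]. unfold filtermap. apply (filter_imp (fun t => g t < M)); auto.
    - pose proof (is_lim_scal_l _ C _ _ is_lim_exp_m) as H. simpl in H.
      rewrite Rmult_0_r in H. exact H. }
  apply filterlim_locally. intros eps.
  apply filterlim_locally with (eps := eps) in Hlim.
  generalize (filter_and _ _ Hf Hlim). apply filter_imp. intros t [H1 H2].
  change (Rabs (f t - 0) < eps). change (Rabs (C * exp (g t) - 0) < eps) in H2.
  rewrite Rminus_0_r in *. pose proof (Rabs_pos (f t)).
  apply Rabs_lt_between in H2. lra.
Qed.

Lemma kernel_succ_bound_at_0 s t : 0 < s -> 0 < t < 1 ->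
  Rabs (euler_kernel (s + 1) t) <= (1 + 2 / s) * exp (s / 2 * ln t) /\
  Rabs (euler_kernel (s + 1) t * ln t) <= (1 + 2 / s) * exp (s / 2 * ln t).
Proof.
  intros Hs [Ht0 Ht1].
  assert (Hl : ln t < 0) by (rewrite <- ln_1; apply ln_increasing; lra).
  assert (HW : euler_kernel (s + 1) t <= exp (s * ln t))
    by (rewrite euler_kernel_exp; apply exp_monotone; lra).
  assert (HW2 : exp (s * ln t) <= exp (s / 2 * ln t)) by (apply exp_monotone; nra).
  pose proof (euler_kernel_pos (s + 1) t). pose proof (exp_pos (s / 2 * ln t)).
  assert (Hln : - ln t <= 2 / s * exp (- (s / 2) * ln t)).
  { pose proof (exp_gt_self (- (s / 2) * ln t)).
    apply Rmult_le_reg_l with (s / 2); [lra|].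
    replace (s / 2 * (2 / s * exp (- (s / 2) * ln t))) with (exp (- (s / 2) * ln t))
      by (field; lra). lra. }
  assert (Hprod : exp (s * ln t) * exp (- (s / 2) * ln t) = exp (s / 2 * ln t))
    by (rewrite <- exp_plus; f_equal; field).
  assert (0 < 2 / s) by (apply Rdiv_lt_0_compat; lra).
  split.
  - rewrite Rabs_pos_eq by lra. nra.
  - rewrite Rabs_mult, Rabs_pos_eq, Rabs_left by lra.
    apply Rle_trans with (exp (s * ln t) * (2 / s * exp (- (s / 2) * ln t))).
    + apply Rmult_le_compat; lra.
    + replace (exp (s * ln t) * (2 / s * exp (- (s / 2) * ln t)))
        with (2 / s * (exp (s * ln t) * exp (- (s / 2) * ln t))) by ring.
      rewrite Hprod. nra.
Qed.

Lemma kernel_succ_bound_at_oo s t : 0 < s -> 1 < t ->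
  Rabs (euler_kernel (s + 1) t) <= exp ((s + 1) * ln (2 * (s + 1)) - (s + 1)) * exp (- t / 2) /\
  Rabs (euler_kernel (s + 1) t * ln t)
    <= exp ((s + 1) * ln (2 * (s + 1)) - (s + 1)) * exp (- t / 2).
Proof.
  intros Hs Ht.
  assert (Hl : 0 < ln t) by (rewrite <- ln_1; apply ln_increasing; lra).
  assert (Hlt : ln t <= t) by (pose proof (ln_le_sub1 t); lra).
  set (m := s + 1).
  (* t^m e^{-t} <= (2m/e)^m e^{-t/2}, by ln y <= y - 1 at y = t / (2m) *)
  assert (Key : exp (m * ln t - t) <= exp (m * ln (2 * m) - m) * exp (- t / 2)).
  { rewrite <- exp_plus. apply exp_monotone.
    pose proof (ln_le_sub1 (t / (2 * m)) ltac:(apply Rdiv_lt_0_compat; unfold m; lra)) as H.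
    rewrite ln_div in H by (unfold m; lra).
    apply Rmult_le_compat_l with (r := m) in H; [|unfold m; lra].
    replace (m * (t / (2 * m) - 1)) with (t / 2 - m) in H by (field; unfold m; lra).
    lra. }
  pose proof (euler_kernel_pos (s + 1) t).
  assert (HW : euler_kernel (s + 1) t * t = exp (m * ln t - t)).
  { rewrite <- (exp_ln t) at 2 by lra. rewrite euler_kernel_exp, <- exp_plus.
    f_equal. unfold m. ring. }
  unfold m in *. split.
  - rewrite Rabs_pos_eq by lra. eapply Rle_trans; [|exact Key]. rewrite <- HW. nra.
  - rewrite Rabs_mult, !Rabs_pos_eq by lra.
    eapply Rle_trans; [|exact Key]. rewrite <- HW. nra.
Qed.

Lemma kernel_succ_boundary_limits s : 0 < s ->
  filterlim (euler_kernel (s + 1)) (at_right 0) (locally 0) /\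
  filterlim (fun t => euler_kernel (s + 1) t * ln t) (at_right 0) (locally 0) /\
  filterlim (euler_kernel (s + 1)) (Rbar_locally p_infty) (locally 0) /\
  filterlim (fun t => euler_kernel (s + 1) t * ln t) (Rbar_locally p_infty) (locally 0).
Proof.
  intros Hs.
  assert (H0 : forall M, at_right 0 (fun t => s / 2 * ln t < M)).
  { intros M. apply (filter_imp (fun t => 0 < t < exp (M / (s / 2)))).
    - intros t [Ht Htm].
      assert (Hln : ln t < M / (s / 2))
        by (rewrite <- (ln_exp (M / (s / 2))); apply ln_increasing; lra).
      apply Rmult_lt_compat_l with (r := s / 2) in Hln; [|lra].
      replace (s / 2 * (M / (s / 2))) with M in Hln by (field; lra). exact Hln.
    - apply at_right_0_below, exp_pos. }
  assert (Hoo : forall M, Rbar_locally p_infty (fun t => - t / 2 < M))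
    by (intros M; exists (- 2 * M); intros; lra).
  assert (E0 : at_right 0 (fun t => 0 < t < 1)) by (apply at_right_0_below; lra).
  assert (Eoo : Rbar_locally p_infty (fun t => 1 < t)) by (exists 1; auto).
  repeat split.
  - eapply dominated_to_0; [|exact H0].
    eapply filter_imp; [|exact E0]. intros t Ht. apply kernel_succ_bound_at_0; auto.
  - eapply dominated_to_0; [|exact H0].
    eapply filter_imp; [|exact E0]. intros t Ht. apply kernel_succ_bound_at_0; auto.
  - eapply dominated_to_0; [|exact Hoo].
    eapply filter_imp; [|exact Eoo]. intros t Ht. apply kernel_succ_bound_at_oo; auto.
  - eapply dominated_to_0; [|exact Hoo].
    eapply filter_imp; [|exact Eoo]. intros t Ht. apply kernel_succ_bound_at_oo; auto.
Qed.

Lemma is_derive_kernel_succ s t : 0 < t ->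
  is_derive (euler_kernel (s + 1)) t (s * euler_kernel s t - euler_kernel (s + 1) t).
Proof.
  intros Ht.
  apply is_derive_ext with (fun t => exp (((s + 1) - 1) * ln t - t));
    [intros; rewrite euler_kernel_exp; auto|].
  rewrite (euler_kernel_exp (s + 1)), (euler_kernel_exp s).
  auto_derive; auto.
  replace ((s + 1 - 1) * ln t + - t) with ((s - 1) * ln t - t + ln t) by ring.
  rewrite exp_plus, exp_ln by auto.
  replace ((s + 1 - 1) * ln t - t) with ((s - 1) * ln t - t + ln t) by ring.
  rewrite exp_plus, exp_ln by auto. field. lra.
Qed.

Lemma is_derive_kernel_succ_ln s t : 0 < t ->
  is_derive (fun t => euler_kernel (s + 1) t * ln t) t
    (s * (euler_kernel s t * ln t) - euler_kernel (s + 1) t * ln t + euler_kernel s t).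
Proof.
  intros Ht.
  apply is_derive_ext with (fun t => exp (((s + 1) - 1) * ln t - t) * ln t);
    [intros; rewrite euler_kernel_exp; auto|].
  rewrite (euler_kernel_exp (s + 1)), (euler_kernel_exp s).
  auto_derive; auto.
  replace ((s + 1 - 1) * ln t + - t) with ((s - 1) * ln t - t + ln t) by ring.
  rewrite exp_plus, exp_ln by auto.
  replace ((s + 1 - 1) * ln t - t) with ((s - 1) * ln t - t + ln t) by ring.
  rewrite exp_plus, exp_ln by auto. field. lra.
Qed.

(* Gamma(s+1) = s Gamma(s): integrate the first derivative over (0, +oo). *)
Lemma Gamma_succ s : 0 < s -> Gamma (s + 1) = s * Gamma s.
Proof.
  intros Hs. destruct (kernel_succ_boundary_limits s Hs) as [L0 [_ [Loo _]]].
  assert (Hparts : is_RInt_0oo (fun t => s * euler_kernel s t - euler_kernel (s + 1) t) (0 - 0)).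
  { apply is_RInt_0oo_derive with (euler_kernel (s + 1)); auto.
    - intros; apply is_derive_kernel_succ; auto.
    - apply cont_pos_minus; [apply cont_pos_scal|]; apply cont_pos_kernel. }
  assert (Hlin : is_RInt_0oo (fun t => s * euler_kernel s t - euler_kernel (s + 1) t)
                   (s * Gamma s - Gamma (s + 1))).
  { apply is_RInt_0oo_minus; [apply is_RInt_0oo_scal|]; apply is_RInt_0oo_Gamma; lra. }
  pose proof (is_RInt_0oo_eq _ _ _ Hparts Hlin). lra.
Qed.

(* Gamma_ln(s+1) = s Gamma_ln(s) + Gamma(s), i.e. the derivative of the previous
   recurrence, again by integrating an exact derivative. *)
Lemma Gamma_ln_succ s : 0 < s -> Gamma_ln (s + 1) = s * Gamma_ln s + Gamma s.
Proof.
  intros Hs. destruct (kernel_succ_boundary_limits s Hs) as [_ [L0 [_ Loo]]].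
  assert (Hparts : is_RInt_0oo
    (fun t => s * (euler_kernel s t * ln t) - euler_kernel (s + 1) t * ln t + euler_kernel s t)
    (0 - 0)).
  { apply is_RInt_0oo_derive with (fun t => euler_kernel (s + 1) t * ln t); auto.
    - intros; apply is_derive_kernel_succ_ln; auto.
    - apply cont_pos_plus; [apply cont_pos_minus; [apply cont_pos_scal|]|].
      + apply cont_pos_kernel_ln.
      + apply cont_pos_kernel_ln.
      + apply cont_pos_kernel. }
  assert (Hlin : is_RInt_0oo
    (fun t => s * (euler_kernel s t * ln t) - euler_kernel (s + 1) t * ln t + euler_kernel s t)
    (s * Gamma_ln s - Gamma_ln (s + 1) + Gamma s)).
  { apply is_RInt_0oo_plus; [apply is_RInt_0oo_minus; [apply is_RInt_0oo_scal|]|].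
    - apply is_RInt_0oo_Gamma_ln; lra.
    - apply is_RInt_0oo_Gamma_ln; lra.
    - apply is_RInt_0oo_Gamma; lra. }
  pose proof (is_RInt_0oo_eq _ _ _ Hparts Hlin). lra.
Qed.

(* Gamma(s) > 0: it dominates the integral of the positive kernel over [1, 2]. *)
Lemma Gamma_pos s : 0 < s -> 0 < Gamma s.
Proof.
  intros Hs. destruct (is_RInt_0oo_nonneg (euler_kernel s)) as [S [H HS]].
  - apply cont_pos_kernel.
  - intros; left; apply euler_kernel_pos.
  - apply bounded_partials_kernel; auto.
  - rewrite (is_RInt_0oo_eq _ _ _ (is_RInt_0oo_Gamma s Hs) H).
    apply Rlt_le_trans with (RInt (euler_kernel s) 1 2); [|apply HS; lra].
    apply RInt_gt_0; [lra | intros; apply euler_kernel_pos |].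
    intros; apply cont_pos_kernel; lra.
Qed.

Lemma digamma_succ x : 0 < x -> digamma (x + 1) = digamma x + / x.
Proof.
  intros Hx. rewrite !digamma_eq, Gamma_ln_succ, Gamma_succ by lra.
  pose proof (Gamma_pos x Hx). field. split; lra.
Qed.

(* psi(y) <= ln y, from the integrated inequality ln(t/y) <= t/y - 1. *)
Lemma digamma_le_ln y : 0 < y -> digamma y <= ln y.
Proof.
  intros Hy. pose proof (Gamma_pos y Hy) as HG.
  assert (H : is_RInt_0oo
     (fun t => ((ln y - 1) * euler_kernel y t + / y * euler_kernel (y + 1) t) - euler_kernel y t * ln t)
     (((ln y - 1) * Gamma y + / y * Gamma (y + 1)) - Gamma_ln y)).
  { apply is_RInt_0oo_minus; [apply is_RInt_0oo_plus; apply is_RInt_0oo_scal|].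
    - apply is_RInt_0oo_Gamma; lra.
    - apply is_RInt_0oo_Gamma; lra.
    - apply is_RInt_0oo_Gamma_ln; lra. }
  apply is_RInt_0oo_ge0 in H.
  - rewrite Gamma_succ in H by auto. rewrite digamma_eq by auto.
    apply Rmult_le_reg_r with (Gamma y); auto. unfold Rdiv.
    rewrite Rmult_assoc, Rinv_l by lra.
    replace (/ y * (y * Gamma y)) with (Gamma y) in H by (field; lra). lra.
  - intros t Ht. rewrite euler_kernel_succ by auto. pose proof (euler_kernel_pos y t).
    pose proof (ln_le_sub1 (t / y) ltac:(apply Rdiv_lt_0_compat; lra)) as K.
    rewrite ln_div in K by lra.
    replace ((ln y - 1) * euler_kernel y t + / y * (t * euler_kernel y t) - euler_kernel y t * ln t)
      with (euler_kernel y t * ((t / y - 1) - (ln t - ln y))) by (field; lra).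
    apply Rmult_le_pos; lra.
Qed.

(* psi(x) >= ln x - 1/x, from the integrated inequality ln(x/t) <= x/t - 1. *)
Lemma digamma_ge_ln_sub_inv x : 0 < x -> ln x - / x <= digamma x.
Proof.
  intros Hx. pose proof (Gamma_pos x Hx) as HG.
  assert (H : is_RInt_0oo
     (fun t => euler_kernel (x + 1) t * ln t - (ln x + 1) * euler_kernel (x + 1) t
               + x * euler_kernel x t)
     (Gamma_ln (x + 1) - (ln x + 1) * Gamma (x + 1) + x * Gamma x)).
  { apply is_RInt_0oo_plus; [apply is_RInt_0oo_minus; [|apply is_RInt_0oo_scal]|
      apply is_RInt_0oo_scal].
    - apply is_RInt_0oo_Gamma_ln; lra.
    - apply is_RInt_0oo_Gamma; lra.
    - apply is_RInt_0oo_Gamma; lra. }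
  apply is_RInt_0oo_ge0 in H.
  - rewrite Gamma_succ, Gamma_ln_succ in H by auto. rewrite digamma_eq by auto.
    apply Rmult_le_reg_r with (x * Gamma x); [nra|].
    replace (Gamma_ln x / Gamma x * (x * Gamma x)) with (x * Gamma_ln x) by (field; lra).
    replace ((ln x - / x) * (x * Gamma x)) with (x * Gamma x * ln x - Gamma x) by (field; lra).
    nra.
  - intros t Ht. rewrite euler_kernel_succ by auto. pose proof (euler_kernel_pos x t).
    pose proof (ln_le_sub1 (x / t) ltac:(apply Rdiv_lt_0_compat; lra)) as K.
    rewrite ln_div in K by lra.
    replace (t * euler_kernel x t * ln t - (ln x + 1) * (t * euler_kernel x t) + x * euler_kernel x t)
      with ((euler_kernel x t * t) * ((x / t - 1) - (ln x - ln t))) by (field; lra).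
    apply Rmult_le_pos; nra.
Qed.

Lemma exp_correlation k u c : 0 < k -> 0 <= (u - c) * (exp (k * u) - exp (k * c)).
Proof.
  intros Hk. destruct (Rle_dec c u).
  - assert (exp (k * c) <= exp (k * u)) by (apply exp_monotone; nra). nra.
  - assert (exp (k * u) <= exp (k * c)) by (apply exp_monotone; nra). nra.
Qed.

(* With e^{(y-x)c} = Gamma y / Gamma x,
   int (ln t - c) (t^{y-1} e^{-t}/Gamma y - t^{x-1} e^{-t}/Gamma x) dt
   = psi y - psi x is nonnegative, its integrand being a positive multiple of
   (ln t - c)(t^{y-x} - e^{(y-x)c}). *)
Lemma digamma_mono x y : 0 < x -> x < y -> digamma x <= digamma y.
Proof.
  intros Hx Hxy. assert (Hy : 0 < y) by lra.
  pose proof (Gamma_pos x Hx) as Gx. pose proof (Gamma_pos y Hy) as Gy.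
  set (c := (ln (Gamma y) - ln (Gamma x)) / (y - x)).
  assert (Hc : exp ((y - x) * c) = Gamma y / Gamma x).
  { unfold c. replace ((y - x) * ((ln (Gamma y) - ln (Gamma x)) / (y - x)))
      with (ln (Gamma y) - ln (Gamma x)) by (field; lra).
    unfold Rminus; rewrite exp_plus, exp_Ropp, !exp_ln by lra. reflexivity. }
  assert (H : is_RInt_0oo
     (fun t => (/ Gamma y * (euler_kernel y t * ln t) - / Gamma x * (euler_kernel x t * ln t))
               - (c * (/ Gamma y * euler_kernel y t) - c * (/ Gamma x * euler_kernel x t)))
     ((/ Gamma y * Gamma_ln y - / Gamma x * Gamma_ln x)
               - (c * (/ Gamma y * Gamma y) - c * (/ Gamma x * Gamma x)))).
  { apply is_RInt_0oo_minus; apply is_RInt_0oo_minus.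
    - apply is_RInt_0oo_scal, is_RInt_0oo_Gamma_ln; lra.
    - apply is_RInt_0oo_scal, is_RInt_0oo_Gamma_ln; lra.
    - apply is_RInt_0oo_scal, is_RInt_0oo_scal, is_RInt_0oo_Gamma; lra.
    - apply is_RInt_0oo_scal, is_RInt_0oo_scal, is_RInt_0oo_Gamma; lra. }
  apply is_RInt_0oo_ge0 in H.
  - rewrite !digamma_eq by auto. rewrite !Rinv_l in H by lra. unfold Rdiv. lra.
  - intros t Ht. pose proof (euler_kernel_pos x t) as Wp.
    replace y with (x + (y - x)) at 2 4 by ring. rewrite euler_kernel_shift.
    replace ((/ Gamma y * (exp ((y - x) * ln t) * euler_kernel x t * ln t)
              - / Gamma x * (euler_kernel x t * ln t))
             - (c * (/ Gamma y * (exp ((y - x) * ln t) * euler_kernel x t))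
                - c * (/ Gamma x * euler_kernel x t)))
      with (euler_kernel x t / Gamma y
            * ((ln t - c) * (exp ((y - x) * ln t) - exp ((y - x) * c))))
      by (rewrite Hc; field; lra).
    apply Rmult_le_pos; [apply Rlt_le, Rdiv_lt_0_compat; lra|].
    apply exp_correlation. lra.
Qed.

(* Refined upper bound psi(x) <= ln x - 1/(2x) for 0 < x <= 1/2: apply psi <= ln at
   x + 4, go back down with the recurrence, and compare ln(x+4) with ln(8x) via
   ln y <= y - 1 (using ln 2 < 0.74). *)
Lemma digamma_le_ln_sub_half_inv x : 0 < x -> x <= / 2 -> digamma x <= ln x - / (2 * x).
Proof.
  intros Hx Hx2.
  pose proof (digamma_le_ln (x + 4) ltac:(lra)) as U.
  replace (x + 4) with ((((x + 1) + 1) + 1) + 1) in U at 1 by ring.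
  rewrite !digamma_succ in U by lra.
  assert (K : ln (x + 4) - ln (8 * x) <= (x + 4) / (8 * x) - 1).
  { rewrite <- ln_div by lra. apply ln_le_sub1. apply Rdiv_lt_0_compat; lra. }
  assert (E8 : ln (8 * x) = 3 * ln 2 + ln x).
  { replace (8 * x) with (2 * (2 * (2 * x))) by ring. rewrite !ln_mult by lra. ring. }
  pose proof ln2_lt.
  assert (I1 : 2 / 3 <= / (x + 1)).
  { replace (2 / 3) with (/ (3 / 2)) by field. apply Rinv_le_contravar; lra. }
  assert (I2 : 2 / 5 <= / (x + 1 + 1)).
  { replace (2 / 5) with (/ (5 / 2)) by field. apply Rinv_le_contravar; lra. }
  assert (I3 : 2 / 7 <= / (x + 1 + 1 + 1)).
  { replace (2 / 7) with (/ (7 / 2)) by field. apply Rinv_le_contravar; lra. }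
  replace ((x + 4) / (8 * x)) with (/ 8 + / 2 * / x) in K by (field; lra).
  replace (/ (2 * x)) with (/ 2 * / x) by (field; lra).
  lra.
Qed.

(* theta_{lam,nu} for nu < 0 < nu^2 < lam.  Write s = sqrt lam > -nu; then
   theta = (psi(x) + 2 gamma + ln(2s)) / (2 pi) with x = (s + nu)/(2s) in (0, 1/2]. *)
Lemma sqrt_gt_neg nu lam : nu < 0 -> nu ^ 2 < lam -> - nu < sqrt lam.
Proof.
  intros Hn Hl. rewrite <- (sqrt_pow2 (- nu)) by lra.
  apply sqrt_lt_1_alt. split; [apply pow2_ge_0|]. replace ((- nu) ^ 2) with (nu ^ 2) by ring. auto.
Qed.

Lemma theta_digamma_arg nu lam : nu < 0 -> nu ^ 2 < lam ->
  theta lam nu = / (2 * PI) * (digamma ((sqrt lam + nu) / (2 * sqrt lam)) + 2 * euler_gamma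
                 + ln (2 * sqrt lam)).
Proof.
  intros Hn Hl. pose proof (sqrt_gt_neg nu lam Hn Hl). unfold theta.
  replace (/ 2 + nu / (2 * sqrt lam)) with ((sqrt lam + nu) / (2 * sqrt lam)) by (field; lra).
  reflexivity.
Qed.

Lemma inv_2PI_pos : 0 < / (2 * PI).
Proof. apply Rinv_0_lt_compat. pose proof PI_RGT_0. lra. Qed.

(* The two-sided estimate: psi(x) >= ln x - 1/x and psi(x) <= ln x - 1/(2x) at
   x = (s + nu)/(2s), where 1/x = 2s/(s + nu) and ln x + ln(2s) = ln(s + nu). *)
Lemma theta_bounds nu lam : nu < 0 -> nu ^ 2 < lam ->
     / (2 * PI) * (ln (sqrt lam + nu) - 2 * sqrt lam / (sqrt lam + nu) + 2 * euler_gamma)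
       <= theta lam nu /\
     theta lam nu <=
     / (2 * PI) * (ln (sqrt lam + nu) - sqrt lam / (sqrt lam + nu) + 2 * euler_gamma).
Proof.
  intros Hn Hl. pose proof (sqrt_gt_neg nu lam Hn Hl) as Hs.
  rewrite theta_digamma_arg by auto.
  set (s := sqrt lam) in *. set (x := (s + nu) / (2 * s)).
  assert (Hx : 0 < x) by (apply Rdiv_lt_0_compat; lra).
  assert (Hx2 : x <= / 2).
  { unfold x. apply Rmult_le_reg_l with (2 * s); [lra|]. field_simplify; lra. }
  assert (Hlx : ln x = ln (s + nu) - ln (2 * s)) by (unfold x; apply ln_div; lra).
  assert (Hix : / x = 2 * s / (s + nu)) by (unfold x; field; lra).
  assert (Hix2 : / (2 * x) = s / (s + nu)) by (unfold x; field; lra).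
  pose proof (digamma_ge_ln_sub_inv x Hx). pose proof (digamma_le_ln_sub_half_inv x Hx Hx2).
  pose proof inv_2PI_pos.
  split; apply Rmult_le_compat_l; lra.
Qed.

(* Strict monotonicity: x = 1/2 + nu/(2s) and ln(2s) both increase with s = sqrt lam,
   the second one strictly, and psi is nondecreasing. *)
Lemma theta_increasing nu l1 l2 : nu < 0 -> nu ^ 2 < l1 -> l1 < l2 -> theta l1 nu < theta l2 nu.
Proof.
  intros Hn H1 H12. assert (H2 : nu ^ 2 < l2) by lra.
  pose proof (sqrt_gt_neg nu l1 Hn H1) as S1. pose proof (sqrt_gt_neg nu l2 Hn H2) as S2.
  rewrite !theta_digamma_arg by auto.
  assert (S12 : sqrt l1 < sqrt l2)
    by (apply sqrt_lt_1_alt; split; [pose proof (pow2_ge_0 nu); lra | auto]).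
  set (s1 := sqrt l1) in *. set (s2 := sqrt l2) in *.
  assert (Hx1 : 0 < (s1 + nu) / (2 * s1)) by (apply Rdiv_lt_0_compat; lra).
  assert (Hxx : (s1 + nu) / (2 * s1) < (s2 + nu) / (2 * s2)).
  { replace ((s1 + nu) / (2 * s1)) with (/ 2 + nu / 2 * / s1) by (field; lra).
    replace ((s2 + nu) / (2 * s2)) with (/ 2 + nu / 2 * / s2) by (field; lra).
    assert (/ s2 < / s1) by (apply Rinv_lt_contravar; nra). nra. }
  pose proof (digamma_mono _ _ Hx1 Hxx).
  assert (ln (2 * s1) < ln (2 * s2)) by (apply ln_increasing; lra).
  pose proof inv_2PI_pos. apply Rmult_lt_compat_l; lra.
Qed.

(* Near lam = nu^2: s + nu = (lam - nu^2)/(s - nu) <= (lam - nu^2)/(-nu), so the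
   term -s/(s + nu) of the upper bound is at most -nu^2/(lam - nu^2). *)
Lemma theta_upper_near nu lam : nu < 0 -> nu ^ 2 < lam -> lam - nu ^ 2 <= - nu ->
  theta lam nu <= / (2 * PI) * (2 * euler_gamma - nu ^ 2 / (lam - nu ^ 2)).
Proof.
  intros Hn Hl Hnear. destruct (theta_bounds nu lam Hn Hl) as [_ Hub].
  pose proof (sqrt_gt_neg nu lam Hn Hl) as Hs.
  assert (Hss : sqrt lam * sqrt lam = lam) by (apply sqrt_sqrt; pose proof (pow2_ge_0 nu); lra).
  set (s := sqrt lam) in *. set (r := s + nu) in *.
  assert (Hr : 0 < r) by (unfold r; lra).
  assert (Hrr : r * (s - nu) = lam - nu ^ 2) by (unfold r; nra).
  assert (Hr1 : r <= 1).
  { apply Rmult_le_reg_r with (- nu); [lra|]. assert (r * - nu <= r * (s - nu)) by nra. nra. }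
  assert (Hln : ln r <= 0) by (pose proof (ln_le_sub1 r Hr); lra).
  assert (Hfrac : nu ^ 2 / (lam - nu ^ 2) <= s / r).
  { rewrite <- Hrr. apply Rmult_le_reg_r with (r * (s - nu)); [nra|].
    unfold Rdiv. field_simplify; [|lra|lra]. nra. }
  eapply Rle_trans; [exact Hub|]. pose proof inv_2PI_pos. apply Rmult_le_compat_l; lra.
Qed.

(* For lam >= 4 nu^2 we have s + nu >= s/2, so the lower bound is >= ln(s/2) - 4 + 2 gamma. *)
Lemma theta_lower_far nu lam : nu < 0 -> 4 * nu ^ 2 <= lam ->
  / (2 * PI) * (ln (sqrt lam / 2) - 4 + 2 * euler_gamma) <= theta lam nu.
Proof.
  intros Hn Hfar. assert (Hl : nu ^ 2 < lam) by nra.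
  destruct (theta_bounds nu lam Hn Hl) as [Hlb _].
  assert (Hs : - 2 * nu <= sqrt lam).
  { rewrite <- (sqrt_pow2 (- 2 * nu)) by lra. apply sqrt_le_1_alt. nra. }
  set (s := sqrt lam) in *. set (r := s + nu) in *.
  assert (Hr : s / 2 <= r) by (unfold r; lra).
  assert (Hq : 2 * s / r <= 4).
  { apply Rmult_le_reg_r with r; [lra|]. replace (2 * s / r * r) with (2 * s) by (field; lra). lra. }
  assert (ln (s / 2) <= ln r) by (apply ln_le; lra).
  eapply Rle_trans; [|exact Hlb]. pose proof inv_2PI_pos. apply Rmult_le_compat_l; lra.
Qed.

Lemma theta_lim_right nu : nu < 0 ->
  filterlim (fun lam => theta lam nu) (at_right (nu ^ 2)) (Rbar_locally m_infty).
Proof.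
  intros Hn P [M HM].
  (* theta <= (2 gamma - nu^2/(lam - nu^2))/(2 pi) < M once lam - nu^2 < nu^2 / A *)
  set (A := Rabs (2 * euler_gamma - 2 * PI * M) + 1).
  assert (HA : 1 <= A) by (unfold A; pose proof (Rabs_pos (2 * euler_gamma - 2 * PI * M)); lra).
  assert (Hdelta : 0 < Rmin (- nu) (nu ^ 2 / A)) by (apply Rmin_pos; [|apply Rdiv_lt_0_compat]; nra).
  exists (mkposreal _ Hdelta). intros lam Hlam Hl. apply HM.
  assert (Hd : Rabs (lam - nu ^ 2) < Rmin (- nu) (nu ^ 2 / A)) by exact Hlam.
  rewrite Rabs_pos_eq in Hd by lra.
  pose proof (Rmin_l (- nu) (nu ^ 2 / A)). pose proof (Rmin_r (- nu) (nu ^ 2 / A)).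
  eapply Rle_lt_trans; [apply theta_upper_near; auto; lra|].
  assert (Hbig : A < nu ^ 2 / (lam - nu ^ 2)).
  { apply Rmult_lt_reg_r with (lam - nu ^ 2); [lra|].
    replace (nu ^ 2 / (lam - nu ^ 2) * (lam - nu ^ 2)) with (nu ^ 2) by (field; lra).
    apply Rmult_lt_reg_r with (/ A); [apply Rinv_0_lt_compat; lra|].
    replace (A * (lam - nu ^ 2) * / A) with (lam - nu ^ 2) by (field; lra). lra. }
  pose proof (Rle_abs (2 * euler_gamma - 2 * PI * M)).
  apply Rmult_lt_reg_l with (2 * PI); [pose proof PI_RGT_0; lra|].
  rewrite <- Rmult_assoc, Rinv_r, Rmult_1_l by (pose proof PI_RGT_0; lra).
  unfold A in Hbig. lra.
Qed.

Lemma theta_lim_oo nu : nu < 0 ->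
  filterlim (fun lam => theta lam nu) (Rbar_locally p_infty) (Rbar_locally p_infty).
Proof.
  intros Hn P [M HM].
  (* theta >= (ln(sqrt lam / 2) - 4 + 2 gamma)/(2 pi) > M once sqrt lam > 2 e^B *)
  set (B := 2 * PI * M + 4 - 2 * euler_gamma).
  set (c := 2 * exp B). assert (Hc : 0 < c) by (unfold c; pose proof (exp_pos B); lra).
  exists (Rmax (4 * nu ^ 2) (c ^ 2)). intros lam Hlam. apply HM.
  pose proof (Rmax_l (4 * nu ^ 2) (c ^ 2)). pose proof (Rmax_r (4 * nu ^ 2) (c ^ 2)).
  eapply Rlt_le_trans; [|apply theta_lower_far; auto; lra].
  assert (Hsc : c < sqrt lam).
  { rewrite <- (sqrt_pow2 c) by lra. apply sqrt_lt_1_alt. split; [apply pow2_ge_0 | lra]. }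
  assert (HB : B < ln (sqrt lam / 2)).
  { rewrite <- (ln_exp B). apply ln_increasing; [apply exp_pos|]. unfold c in Hsc. lra. }
  apply Rmult_lt_reg_l with (2 * PI); [pose proof PI_RGT_0; lra|].
  rewrite <- Rmult_assoc, Rinv_r, Rmult_1_l by (pose proof PI_RGT_0; lra).
  unfold B in HB. lra.
Qed.

Theorem mainTheorem7 (nu : R) (hnu : nu < 0) :
  (forall l1 l2 : R, nu ^ 2 < l1 -> l1 < l2 -> theta l1 nu < theta l2 nu) /\
  filterlim (fun lam => theta lam nu) (at_right (nu ^ 2)) (Rbar_locally m_infty) /\
  filterlim (fun lam => theta lam nu) (Rbar_locally p_infty) (Rbar_locally p_infty) /\
  (forall lam : R, nu ^ 2 < lam ->
     / (2 * PI) * (ln (sqrt lam + nu) - 2 * sqrt lam / (sqrt lam + nu) + 2 * euler_gamma)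
       <= theta lam nu /\
     theta lam nu <=
     / (2 * PI) * (ln (sqrt lam + nu) - sqrt lam / (sqrt lam + nu) + 2 * euler_gamma)).
Proof.
  split; [|split; [|split]].
  - intros l1 l2; apply theta_increasing; auto.
  - apply theta_lim_right; auto.
  - apply theta_lim_oo; auto.
  - intros lam; apply theta_bounds; auto.
Qed.
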